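(* For every $n\ge 2$, if $\Delta,\Delta'\in\mathcal{P}_n$ form a special pair for rule $162$, then $lab_\Delta((i+1,i))=lab_{\Delta'}((i+1,i))$ for all $i\in\mathbb{Z}_n$.
   Context: Cells are indexed by $\mathbb{Z}_n=\{0,\dots,n-1\}$, indices modulo $n$. Rule $162$ has local rule $r_{162}(x_1,x_2,x_3)=(x_1\vee\neg x_2)\wedge x_3$ and global function $f_{162,n}(x)_i=r_{162}(x_{i-1},x_i,x_{i+1})$. An update schedule is an ordered partition $\Delta=(\Delta_1,\dots,\Delta_k)$ of $\mathbb{Z}_n$ into nonempty blocks; $\mathcal{P}_n$ is the set of them. For a block $B$ let $f^{(B)}(x)_i=f_{162,n}(x)_i$ if $i\in B$ and $x_i$ otherwise; $f^{(\Delta)}_{162,n}=f^{(\Delta_k)}\circ\cdots\circ f^{(\Delta_1)}$. For $u,v\in\mathbb{Z}_n$ with $u\in\Delta_a$, $v\in\Delta_b$, $lab_\Delta((u,v))=\oplus$ if $b\le a$ and $\ominus$ if $a<b$. $\Delta\equiv\Delta'$ iff $lab_\Delta$ and $lab_{\Delta'}$ agree on every arc $(i,i+1)$ and $(i+1,i)$. A pair $\Delta,\Delta'$ is special for rule $162$ if $\Delta\not\equiv\Delta'$ but $f^{(\Delta)}_{162,n}=f^{(\Delta')}_{162,n}$. *)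

From mathcomp Require Import all_boot.
Set Implicit Arguments. Unset Strict Implicit. Unset Printing Implicit Defensive.

(* Cells are 'I_n; i+1 and i-1 modulo n are ordS i and ord_pred i. *)

Definition r162 (x1 x2 x3 : bool) : bool := (x1 || ~~ x2) && x3.

Definition config (n : nat) := {ffun 'I_n -> bool}.

Definition f162 (n : nat) (x : config n) : config n :=
  [ffun i => r162 (x (ord_pred i)) (x i) (x (ordS i))].

Definition schedule (n : nat) := seq {set 'I_n}.

Definition is_schedule (n : nat) (D : schedule n) : Prop :=
  (forall B, B \in D -> B != set0) /\
  (forall i : 'I_n, count (fun B : {set 'I_n} => i \in B) D = 1).

Definition block_update (n : nat) (B : {set 'I_n}) (x : config n) : config n :=
  [ffun i => if i \in B then f162 x i else x i].

Definition sched_fun (n : nat) (D : schedule n) (x : config n) : config n :=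
  foldl (fun y B => block_update B y) x D.

Definition blk (n : nat) (D : schedule n) (u : 'I_n) : nat :=
  find (fun B : {set 'I_n} => u \in B) D.

Inductive label := Plus | Minus.

Definition lab (n : nat) (D : schedule n) (u v : 'I_n) : label :=
  if blk D v <= blk D u then Plus else Minus.

Definition sched_equiv (n : nat) (D D' : schedule n) : Prop :=
  forall i : 'I_n,
    lab D i (ordS i) = lab D' i (ordS i) /\
    lab D (ordS i) i = lab D' (ordS i) i.

Definition special162 (n : nat) (D D' : schedule n) : Prop :=
  ~ sched_equiv D D' /\ (forall x : config n, sched_fun D x = sched_fun D' x).

(* Under rule 162 a cell in state 0 copies its right neighbour, and a cell in
   state 1 whose left neighbour is 0 becomes 0.  Start from the configuration
   that is 1 everywhere except at cell i.  If i+1 is updated strictly before i,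
   it sees 0 on its left and becomes 0, which cell i then copies; if i is
   updated no later than i+1, cell i copies the 1 still sitting at i+1.  So
   f^(Δ) determines the label of (i+1, i). *)

From mathcomp Require Import all_boot.
Set Implicit Arguments.
Unset Strict Implicit.
Unset Printing Implicit Defensive.

Arguments sched_fun : simpl never.

Lemma ordS_neq n (i : 'I_n) : 1 < n -> ordS i != i.
Proof.
move=> n_gt1; apply/eqP => /(congr1 val) /=; case: i => m /= lt_mn.
have [lt_m1n | ] := ltnP m.+1 n.
  by rewrite modn_small // => /eqP; rewrite eqn_leq ltnn.
rewrite leq_eqVlt ltnNge lt_mn orbF => /eqP n_eq.
by rewrite n_eq modnn => m0; move: n_gt1; rewrite n_eq -m0.
Qed.

Section ScheduleEvaluation.

Variable n : nat.
Implicit Types (D : schedule n) (x : config n) (c : 'I_n).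

Local Notation occurrences c D := (count (fun B : {set 'I_n} => c \in B) D).

Lemma sched_fun_cons B D x :
  sched_fun (B :: D) x = sched_fun D (block_update B x).
Proof. by []. Qed.

Lemma sched_fun_take_before D x c k :
  k <= blk D c -> sched_fun (take k D) x c = x c.
Proof.
elim: D x k => [|B D IH] x [|k] //=.
rewrite /blk /=; case: (boolP (c \in B)) => //= cNB le_k_blk.
by rewrite sched_fun_cons IH // ffunE (negbTE cNB).
Qed.

Lemma sched_fun_untouched D x c :
  occurrences c D = 0 -> sched_fun D x c = x c.
Proof.
move=> /eqP; rewrite -leqn0 leqNgt -has_count has_find -leqNgt => le_size_blk.
by rewrite -(sched_fun_take_before x le_size_blk) take_size.
Qed.

Lemma sched_fun_at_blk D x c :
  occurrences c D = 1 -> sched_fun D x c = f162 (sched_fun (take (blk D c) D) x) c.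
Proof.
elim: D x => [|B D IH] x //=.
rewrite /blk /=; case: (boolP (c \in B)) => /= cB once.
  by rewrite sched_fun_cons sched_fun_untouched ?ffunE ?cB //; case: once.
by rewrite sched_fun_cons IH.
Qed.

Lemma sched_fun_take_after D x c k :
  occurrences c D = 1 -> blk D c < k -> sched_fun (take k D) x c = sched_fun D x c.
Proof.
elim: D x k => [|B D IH] x [|k] //=.
rewrite /blk /=; case: (boolP (c \in B)) => /= cB once lt_blk_k.
  have notin_D : occurrences c D = 0 by case: once.
  have notin_take : occurrences c (take k D) = 0.
    by apply/eqP; rewrite -leqn0 -notin_D -{2}(cat_take_drop k D) count_cat leq_addr.
  by rewrite !sched_fun_cons !sched_fun_untouched.
by rewrite !sched_fun_cons IH.
Qed.

End ScheduleEvaluation.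

Definition probe n (i : 'I_n) : config n := [ffun j => j != i].

Lemma sched_fun_probe n (D : schedule n) (i : 'I_n) :
  1 < n -> is_schedule D ->
  sched_fun D (probe i) i = (blk D i <= blk D (ordS i)).
Proof.
move=> n_gt1 [_ once].
have probe_i : probe i i = false by rewrite ffunE eqxx.
have probe_Si : probe i (ordS i) = true by rewrite ffunE ordS_neq.
rewrite sched_fun_at_blk // ffunE (sched_fun_take_before _ (leqnn _)) probe_i.
rewrite /r162 orbT /=.
have [le_i_Si | lt_Si_i] := leqP (blk D i) (blk D (ordS i)).
  by rewrite sched_fun_take_before.
rewrite sched_fun_take_after // sched_fun_at_blk // ffunE ordSK.
rewrite (sched_fun_take_before _ (leqnn _)) probe_Si.
by rewrite (sched_fun_take_before _ (ltnW lt_Si_i)) probe_i.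
Qed.

Lemma lab_succ_sched_fun n (D : schedule n) (i : 'I_n) :
  1 < n -> is_schedule D ->
  lab D (ordS i) i = if sched_fun D (probe i) i then Plus else Minus.
Proof. by move=> n_gt1 schedD; rewrite sched_fun_probe. Qed.

Theorem mainTheorem19 (n : nat) (D D' : schedule n) :
  2 <= n -> is_schedule D -> is_schedule D' -> special162 D D' ->
  forall i : 'I_n, lab D (ordS i) i = lab D' (ordS i) i.
Proof.
move=> n_ge2 schedD schedD' [_ same_fun] i.
by rewrite !lab_succ_sched_fun // same_fun.
Qed.
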